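(* Let $\delta\le\frac14$ and let $\mathcal{I}$ be a $\delta$-ONI instance with $n$ agents and $|N^1_1|\le n\left(\frac14-\delta\right)/\left(\frac14+\frac\delta3\right)$. Then every agent $i\in N^1_1$ receives a bag of value at least $\left(\frac34+\delta\right)\mathrm{MMS}_i$ at the end of Algorithm $\mathtt{approxMMS1}(\mathcal{I},\delta)$.
   Context: Instance: agents $[n]$, goods $[m]$, additive valuations; goods with index larger than $m$ are dummy goods of value 0; $\mathrm{MMS}_i$ is the max over partitions of the goods into $n$ bundles of the minimum bundle value for $i$. Ordered: $v_i(1)\ge\dots\ge v_i(m)$ for all $i$. Normalized: every agent $i$ has an MMS partition with all $n$ bundles of value exactly 1 to $i$. $\alpha$-irreducible: for every $i$, $v_i(1)<\alpha$, $v_i(\{2n-1,2n,2n+1\})<\alpha$, $v_i(\{3n-2,\dots,3n+1\})<\alpha$, $v_i(\{1,2n+1\})<\alpha$. $\delta$-ONI: ordered, normalized, $(3/4+\delta)$-irreducible. $B_k=\{k,2n-k+1\}$ ($k\in[n]$); $N^1=\{i:v_i(B_k)\le1\ \forall k\}$; $N^1_1=\{i\in N^1:v_i(2n+1)\ge\frac14-5\delta\}$. Algorithm $\mathtt{approxMMS1}(\mathcal{I},\delta)$: $\alpha=3/4+\delta$, bags $B_1,\dots,B_n$. Phase 1: while some unassigned agent $i$ and unassigned bag $B$ have $v_i(B)\ge\alpha$, assign such $B$ to an agent valuing it at least $\alpha$, choosing an agent of $N^1_1$ whenever one qualifies. Phase 2: process remaining bags one by one; for the current bag $B$, while no unassigned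 agent values it at least $\alpha$, add an arbitrary unused good with index $>2n$; then assign $B$ to an unassigned agent valuing it at least $\alpha$, preferring $N^1_1$. (If a good must be added but none is left, the algorithm stops.) *)

From HB Require Import structures.
From mathcomp Require Import all_boot all_order all_algebra.
Set Implicit Arguments. Unset Strict Implicit. Unset Printing Implicit Defensive.
Import Order.TTheory GRing.Theory Num.Theory.
Local Open Scope ring_scope.

(* Goods are natural-number indices 1..m (1-based, as in the
   paper); v i g is agent i's value of good g.  Indices > m are dummy goods of
   value 0 (imposed by [valid_instance]); index 0 is never used. *)

Definition vset (R : realFieldType) (n : nat) (v : 'I_n -> nat -> R)
  (i : 'I_n) (S : seq nat) : R := \sum_(g <- S) v i g.

(* A partition of the goods [m] into n bundles is a map from goods to bundles;
   the good g : 'I_m stands for the good with index g+1. *)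
Definition bundle (R : realFieldType) (n m : nat) (v : 'I_n -> nat -> R)
  (i : 'I_n) (a : {ffun 'I_m -> 'I_n}) (j : 'I_n) : R :=
  \sum_(g : 'I_m | a g == j) v i g.+1.

Definition is_MMS (R : realFieldType) (n m : nat) (v : 'I_n -> nat -> R)
  (i : 'I_n) (mu : R) : Prop :=
  (exists a : {ffun 'I_m -> 'I_n}, forall j, mu <= bundle v i a j) /\
  (forall a : {ffun 'I_m -> 'I_n}, exists j, bundle v i a j <= mu).

Definition valid_instance (R : realFieldType) (n m : nat) (v : 'I_n -> nat -> R) :=
  (forall i g, 0 <= v i g) /\ (forall i g, (m < g)%N -> v i g = 0).

Definition ordered (R : realFieldType) (n m : nat) (v : 'I_n -> nat -> R) :=
  forall i g, (1 <= g)%N -> (g < m)%N -> v i g.+1 <= v i g.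

Definition normalized (R : realFieldType) (n m : nat) (v : 'I_n -> nat -> R) :=
  forall i, exists a : {ffun 'I_m -> 'I_n},
    (forall j, bundle v i a j = 1) /\
    (forall a' : {ffun 'I_m -> 'I_n}, exists j, bundle v i a' j <= 1).

Definition irreducible (R : realFieldType) (n : nat) (v : 'I_n -> nat -> R)
  (alpha : R) :=
  forall i,
    [/\ v i 1%N < alpha,
        vset v i [:: (2 * n - 1)%N; (2 * n)%N; (2 * n + 1)%N] < alpha,
        vset v i [:: (3 * n - 2)%N; (3 * n - 1)%N; (3 * n)%N; (3 * n + 1)%N] < alpha
      & vset v i [:: 1%N; (2 * n + 1)%N] < alpha].

Definition ONI (R : realFieldType) (n m : nat) (v : 'I_n -> nat -> R) (delta : R) :=
  [/\ ordered m v, normalized m v & irreducible v (3/4 + delta)].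

(* initial bags: bag k : 'I_n is the paper's B_{k+1} = {k+1, 2n-k} *)
Definition bag0 (n : nat) (k : 'I_n) : seq nat := [:: k.+1; (2 * n - k)%N].

Definition inN1 (R : realFieldType) (n : nat) (v : 'I_n -> nat -> R) (i : 'I_n) : bool :=
  [forall k : 'I_n, vset v i (bag0 k) <= 1].

Definition inN11 (R : realFieldType) (n : nat) (delta : R) (v : 'I_n -> nat -> R)
  (i : 'I_n) : bool :=
  inN1 v i && (1/4 - 5 * delta <= v i (2 * n + 1)%N).

Record state (n : nat) := State {
  owner : 'I_n -> option 'I_n;   (* bag k |-> agent it is assigned to *)
  added : 'I_n -> seq nat;       (* goods added to bag k in phase 2 *)
  phase2 : bool;                 (* false = phase 1, true = phase 2 *)
  cur : option 'I_n              (* bag currently processed in phase 2 *)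
}.

Definition init_state (n : nat) : state n :=
  State (fun _ => None) (fun _ => [::]) false None.

Definition bag (n : nat) (s : state n) (k : 'I_n) : seq nat := bag0 k ++ added s k.

Definition assigned (n : nat) (s : state n) (i : 'I_n) : Prop :=
  exists k, owner s k = Some i.

Definition upd (n : nat) (T : Type) (f : 'I_n -> T) (k : 'I_n) (x : T) : 'I_n -> T :=
  fun k' => if k' == k then x else f k'.

Section Alg.
Variables (R : realFieldType) (n m : nat) (v : 'I_n -> nat -> R) (delta : R).
Local Notation alpha := (3/4 + delta).

Definition eligible (s : state n) (B : seq nat) (j : 'I_n) : Prop :=
  [/\ ~ assigned s j, alpha <= vset v j B &
      (inN11 delta v j \/
       ~ (exists j', [/\ ~ assigned s j', inN11 delta v j' & alpha <= vset v j' B]))].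

Inductive alg_step : state n -> state n -> Prop :=
| step_p1 s k j :
    phase2 s = false -> owner s k = None -> eligible s (bag s k) j ->
    alg_step s (State (upd (owner s) k (Some j)) (added s) false None)
| step_p1_end s :
    phase2 s = false ->
    ~ (exists k j, [/\ owner s k = None, ~ assigned s j & alpha <= vset v j (bag s k)]) ->
    alg_step s (State (owner s) (added s) true None)
| step_select s k :
    phase2 s = true -> cur s = None -> owner s k = None ->
    alg_step s (State (owner s) (added s) true (Some k))
| step_add s k g :
    phase2 s = true -> cur s = Some k ->
    (forall j, ~ assigned s j -> vset v j (bag s k) < alpha) ->
    (2 * n < g)%N -> (g <= m)%N -> (forall k', g \notin added s k') ->
    alg_step s (State (owner s) (upd (added s) k (g :: added s k)) true (Some k))
| step_assign s k j :
    phase2 s = true -> cur s = Some k -> eligible s (bag s k) j ->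
    alg_step s (State (upd (owner s) k (Some j)) (added s) true None).
End Alg.

Inductive reach (T : Type) (step : T -> T -> Prop) (x : T) : T -> Prop :=
| reach_refl : reach step x x
| reach_step y z : reach step x y -> step y z -> reach step x z.

(* the algorithm has ended (normally, or stopped for lack of goods) *)
Definition terminal (T : Type) (step : T -> T -> Prop) (x : T) : Prop :=
  ~ (exists y, step x y).

From HB Require Import structures.
From mathcomp Require Import all_boot all_order all_algebra.
From mathcomp Require Import lra zify.
From Stdlib Require Import Classical.
Set Implicit Arguments. Unset Strict Implicit. Unset Printing Implicit Defensive.
Import Order.TTheory GRing.Theory Num.Theory.
Local Open Scope ring_scope.

(* Write alpha = 3/4 + delta and suppose an agent i of N^1_1 is still unassigned when the
   algorithm stops.  Then phase 2 is stuck on a bag that i values below alpha while every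
   good beyond 2n has been put into some bag, so the n bags carry i's whole value n.  To i,
   an original bag is worth at most 1 (i is in N^1), and a bag only grows while every
   unassigned agent values it below alpha, by goods worth at most v_i(2n+1) each; so every
   bag is worth less than alpha + max(1 - alpha, v_i(2n+1)).  By the priority rule, the bags
   that i values at least alpha went to distinct agents of N^1_1.  Hence
   n < n alpha + |N^1_1| max(1 - alpha, v_i(2n+1)); for either value of the maximum this
   contradicts the bound on |N^1_1|, in the second case because irreducibility gives
   3 v_i(2n+1) < alpha. *)

Lemma uniq_sub_ler_sum (R : numDomainType) (I : eqType) (F : I -> R) (s t : seq I) :
  (forall x, 0 <= F x) -> uniq s -> {subset s <= t} ->
  \sum_(x <- s) F x <= \sum_(x <- t) F x.
Proof.
move=> F_ge0; elim: s t => [|x s IHs] t; first by rewrite big_nil sumr_ge0.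
case/andP=> x_notin_s s_uniq /allP; rewrite /= => /andP[x_in_t s_sub_t].
rewrite (perm_big _ (perm_to_rem x_in_t)) !big_cons lerD2l.
apply: IHs => // y y_in_s; have y_in_t := allP s_sub_t y y_in_s.
have : y \in x :: rem x t by rewrite -(perm_mem (perm_to_rem x_in_t)).
rewrite inE => /orP[/eqP y_eq_x|//].
by move: x_notin_s; rewrite -y_eq_x y_in_s.
Qed.

Lemma sum_lt_threshold (R : numDomainType) (n : nat) (x : 'I_n -> R) (a c : R)
    (S : {set 'I_n}) (k0 : 'I_n) :
  k0 \notin S -> (forall k, k \in S -> x k <= a + c) ->
  (forall k, k \notin S -> x k < a) ->
  \sum_k x k < n%:R * a + #|S|%:R * c.
Proof.
move=> k0_notin_S x_le x_lt.
have -> : n%:R * a + #|S|%:R * c = \sum_k (a + (if k \in S then c else 0)).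
  by rewrite big_split /= -big_mkcond /= !sumr_const card_ord !mulr_natl.
rewrite (bigD1 k0) //= [ltRHS](bigD1 k0) //= (negbTE k0_notin_S) addr0.
apply: ltr_leD; first exact: x_lt.
apply: ler_sum => k _; case: ifPn => [/x_le //|/x_lt/ltW].
by rewrite addr0.
Qed.

Lemma excess_count_le (R : realFieldType) (n s t : nat) (a w : R) :
  0 <= w -> 3 * w < a -> (s <= t)%N -> (s <= n)%N ->
  t%:R * (a / 3) <= n%:R * (1 - a) ->
  n%:R * a + s%:R * Num.max (1 - a) w <= n%:R.
Proof.
move=> w_ge0 w_lt s_le_t s_le_n t_le.
have s_ge0 : 0 <= s%:R :> R by [].
have st : s%:R <= t%:R :> R by rewrite ler_nat.
have nt : s%:R <= n%:R :> R by rewrite ler_nat.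
case: (lerP w (1 - a)) => [w_le|w_gt].
- have : s%:R * (1 - a) <= n%:R * (1 - a) by apply: ler_wpM2r nt; lra.
  lra.
- have : s%:R * w <= s%:R * (a / 3) by apply: (ler_wpM2l s_ge0); lra.
  have : s%:R * (a / 3) <= t%:R * (a / 3) by apply: ler_wpM2r st; lra.
  lra.
Qed.

Lemma mem_bag0 (n g : nat) : (0 < g <= 2 * n)%N -> exists k : 'I_n, g \in bag0 k.
Proof.
move=> g_range; case: (leqP g n) => g_le_n.
  have k_lt : (g.-1 < n)%N by lia.
  by exists (Ordinal k_lt); rewrite !inE; apply/orP; left; apply/eqP; rewrite /=; lia.
have k_lt : (2 * n - g < n)%N by lia.
by exists (Ordinal k_lt); rewrite !inE; apply/orP; right; apply/eqP; rewrite /=; lia.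
Qed.

Section Valuation.
Variables (R : realFieldType) (n m : nat) (v : 'I_n -> nat -> R).
Hypotheses (v_valid : valid_instance m v) (v_ord : ordered m v).

Lemma value_nonincr (i : 'I_n) (g h : nat) : (0 < g <= h)%N -> v i h <= v i g.
Proof.
have [v_ge0 v_dummy] := v_valid; move=> /andP[g_gt0].
elim: h => [|h IHh]; first by rewrite leqn0 => /eqP->.
rewrite leq_eqVlt => /orP[/eqP-> //|]; rewrite ltnS => g_le_h.
apply: le_trans (IHh g_le_h).
case: (ltnP h m) => [h_lt_m|m_le_h]; first by apply: v_ord; lia.
by rewrite v_dummy ?ltnS.
Qed.

Lemma normalized_total_value (i : 'I_n) :
  normalized m v -> \sum_(g <- iota 1 m) v i g = n%:R.
Proof.
move=> /(_ i)[a [a_one _]].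
rewrite -(addn0 1%N) iotaDl big_map -val_enum_ord big_map /=.
rewrite (partition_big a predT) //= -[n in RHS]card_ord -sumr_const.
by apply: eq_bigr => j _; rewrite -(a_one j) /bundle big_enum_cond.
Qed.

Lemma normalized_MMS (i : 'I_n) (mu : R) : normalized m v -> is_MMS m v i mu -> mu = 1.
Proof.
move=> /(_ i)[a [a_one a_max]] [[b mu_le_b] mu_max].
apply/eqP; rewrite eq_le; apply/andP; split.
- by have [j b_le1] := a_max b; apply: le_trans (mu_le_b j) b_le1.
- by have [j a_le_mu] := mu_max a; rewrite -(a_one j).
Qed.

Lemma irreducible_tail_lt (alpha : R) (i : 'I_n) :
  irreducible v alpha -> 3 * v i (2 * n + 1)%N < alpha.
Proof.
move=> /(_ i)[_ + _ _]; rewrite /vset !big_cons big_nil addr0.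
have n_gt0 : (0 < n)%N by case: i => i; lia.
have : v i (2 * n + 1)%N <= v i (2 * n)%N by apply: value_nonincr; lia.
have : v i (2 * n)%N <= v i (2 * n - 1)%N by apply: value_nonincr; lia.
lra.
Qed.

Lemma normalized_le_sum_bags (i : 'I_n) (s : state n) :
  normalized m v ->
  (forall g, (2 * n < g <= m)%N -> exists k, g \in added s k) ->
  n%:R <= \sum_k vset v i (bag s k).
Proof.
move=> v_norm goods_added; rewrite -(normalized_total_value i v_norm).
have -> : \sum_k vset v i (bag s k) =
    \sum_(g <- flatten [seq bag s k | k <- index_enum 'I_n]) v i g.
  by rewrite big_flatten big_map.
apply: uniq_sub_ler_sum; [exact: v_valid.1|exact: iota_uniq|].
move=> g; rewrite mem_iota => g_range.
have [k g_in_k] : exists k, g \in bag s k.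
  case: (leqP g (2 * n)) => [g_le|g_gt].
    have /mem_bag0[k g_in_k] : (0 < g <= 2 * n)%N by lia.
    by exists k; rewrite mem_cat g_in_k.
  have /goods_added[k g_in_k] : (2 * n < g <= m)%N by lia.
  by exists k; rewrite mem_cat g_in_k orbT.
by apply/flattenP; exists (bag s k); rewrite ?map_f ?mem_index_enum.
Qed.

End Valuation.

Lemma assigned_upd (n : nat) (s : state n) (k j x : 'I_n) a p c :
  owner s k = None ->
  assigned (State (upd (owner s) k (Some j)) a p c) x <-> x = j \/ assigned s x.
Proof.
move=> k_free; split.
  by case=> k'; rewrite /upd /=; case: eqP => [_ [->]|_ owned]; [left|right; exists k'].
case=> [->|[k' owned]]; first by exists k; rewrite /upd /= eqxx.
by exists k'; rewrite /upd /=; case: eqP => // k'k; rewrite k'k k_free in owned.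
Qed.

Section Algorithm.
Variables (R : realFieldType) (n m : nat) (v : 'I_n -> nat -> R) (delta : R).
Hypotheses (v_valid : valid_instance m v) (v_ord : ordered m v).
Local Notation alpha := (3/4 + delta).

Record invariant (s : state n) : Prop := {
  owner_value : forall k j, owner s k = Some j -> alpha <= vset v j (bag s k);
  cur_unowned : forall k, cur s = Some k -> owner s k = None /\ phase2 s;
  owner_inj : forall k k' j, owner s k = Some j -> owner s k' = Some j -> k = k';
  owner_priority : forall k j i, owner s k = Some j -> inN11 delta v i ->
    ~ assigned s i -> alpha <= vset v i (bag s k) -> inN11 delta v j;
  phase2_unowned_lt : phase2 s -> forall k j, owner s k = None -> cur s <> Some k ->
    ~ assigned s j -> vset v j (bag s k) < alpha;
  added_bag_lt : forall k j, added s k <> [::] ->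
    assigned s j \/ vset v j (bag s k) < alpha + v j (2 * n + 1)%N
}.

Lemma invariant_init : invariant (init_state n).
Proof. by []. Qed.

Lemma invariant_assign (s : state n) (k j : 'I_n) (p : bool) :
  invariant s -> owner s k = None -> eligible v delta s (bag s k) j ->
  (p -> cur s = Some k) ->
  invariant (State (upd (owner s) k (Some j)) (added s) p None).
Proof.
move=> [val_own cur_free own_inj own_prio free_lt added_lt] k_free.
move=> [j_free j_val j_prio] p_cur.
have assignedE x := @assigned_upd n s k j x (added s) p None k_free.
have still_free x : ~ assigned (State (upd (owner s) k (Some j)) (added s) p None) x ->
    ~ assigned s x.
  by move=> x_free x_ass; apply: x_free; apply/assignedE; right.
split=> /=.
- by move=> k1 j1; rewrite /upd; case: eqP => [-> [<-] //|_]; apply: val_own.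
- by [].
- move=> k1 k2 j1; rewrite /upd.
  case: eqP => [->|_]; case: eqP => [->|_] //; last exact: own_inj.
  + by move=> [<-] owned; case: j_free; exists k2.
  + by move=> owned [j1j]; case: j_free; exists k1; rewrite j1j.
- move=> k1 j1 i; rewrite /upd; case: eqP => [-> [<-]|_ owned] i_N11 /still_free i_free i_val.
  + case: j_prio => // no_rival; case: no_rival; exists i; split=> //.
  + exact: own_prio owned i_N11 i_free i_val.
- move=> p2 k1 j1; rewrite /upd; case: eqP => // k1_ne k1_free _ /still_free j1_free.
  have [_ ph2] := cur_free k (p_cur p2).
  apply: (free_lt ph2 k1 j1 k1_free) => // cur_k1.
  by move: (p_cur p2); rewrite cur_k1 => -[/k1_ne].
- move=> k1 j1 /(added_lt k1 j1) [j1_ass|j1_lt]; [left; apply/assignedE; right|right] => //.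
Qed.

Lemma vset_bag_add (s : state n) (k k1 j : 'I_n) (g : nat) :
  vset v j (bag (State (owner s) (upd (added s) k (g :: added s k)) true (Some k)) k1) =
  if k1 == k then vset v j (bag s k) + v j g else vset v j (bag s k1).
Proof.
rewrite /bag /upd /vset /=; case: eqP => // ->.
by rewrite !big_cons; lra.
Qed.

Lemma invariant_step (s s' : state n) :
  invariant s -> alg_step m v delta s s' -> invariant s'.
Proof.
move=> inv step; case: step inv => {s s'}
  [s k j _ k_free j_elig | s _ no_move | s k ph2 cur_none k_free |
   s k g ph2 cur_k all_low g_gt _ _ | s k j _ cur_k j_elig] inv.
- exact: invariant_assign.
- case: inv => val_own cur_free own_inj own_prio free_lt added_lt.
  split=> //= _ k j k_free _ j_free.
  by rewrite ltNge; apply/negP => j_val; apply: no_move; exists k, j.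
- case: inv => val_own cur_free own_inj own_prio free_lt added_lt.
  split=> //= [k1 [<-] //|_ k1 j k1_free k1_cur j_free].
  by apply: free_lt => //; rewrite cur_none.
- case: inv => val_own cur_free own_inj own_prio free_lt added_lt.
  have [k_free _] := cur_free k cur_k.
  split=> /=.
  + by move=> k1 j; rewrite vset_bag_add; case: eqP => [->|_]; [rewrite k_free|apply: val_own].
  + by move=> k1 [<-].
  + exact: own_inj.
  + by move=> k1 j i; rewrite vset_bag_add; case: eqP => [->|_]; [rewrite k_free|apply: own_prio].
  + move=> _ k1 j k1_free k1_cur j_free; rewrite vset_bag_add; case: eqP => [k1k|_].
      by rewrite k1k in k1_cur.
    by apply: free_lt => //; rewrite cur_k.
  + move=> k1 j; rewrite vset_bag_add /upd /=; case: eqP => [_ _|_ /(added_lt k1 j) //].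
    have [|j_free] := classic (assigned s j); [by left|right].
    have : v j g <= v j (2 * n + 1)%N by apply: (value_nonincr v_valid v_ord); lia.
    have := all_low j j_free; lra.
- by apply: invariant_assign => //; have [] := cur_unowned inv cur_k.
Qed.

Lemma invariant_reach (s : state n) :
  reach (alg_step m v delta) (init_state n) s -> invariant s.
Proof.
elim=> [|s1 s2 _ inv1 step12]; first exact: invariant_init.
exact: invariant_step inv1 step12.
Qed.

Lemma eligible_exists (s : state n) (B : seq nat) (j : 'I_n) :
  ~ assigned s j -> alpha <= vset v j B -> exists j', eligible v delta s B j'.
Proof.
move=> j_free j_val.
have [[j' [j'_free j'_N11 j'_val]]|no_rival] :=
  classic (exists j', [/\ ~ assigned s j', inN11 delta v j' & alpha <= vset v j' B]).
- by exists j'; split=> //; left.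
- by exists j; split=> //; right.
Qed.

Local Notation step := (alg_step m v delta).

Lemma terminal_phase2 (s : state n) : terminal step s -> phase2 s.
Proof.
move=> s_term; case p1: (phase2 s) => //; exfalso; apply: s_term.
have [[k [j [k_free j_free j_val]]]|no_move] :=
  classic (exists k j, [/\ owner s k = None, ~ assigned s j & alpha <= vset v j (bag s k)]).
- have [j' j'_elig] := eligible_exists j_free j_val.
  by eexists; exact: step_p1 p1 k_free j'_elig.
- by eexists; exact: step_p1_end p1 no_move.
Qed.

Lemma terminal_current (s : state n) (i : 'I_n) :
  invariant s -> terminal step s -> ~ assigned s i -> exists k0, cur s = Some k0.
Proof.
move=> inv s_term i_free; have ph2 := terminal_phase2 s_term.
case cur_s: (cur s) => [k0|]; first by exists k0.
have [[k k_free]|all_owned] := classic (exists k, owner s k = None).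
  by exfalso; apply: s_term; eexists; exact: step_select ph2 cur_s k_free.
pose f k := odflt i (owner s k).
have owner_f k : owner s k = Some (f k).
  by rewrite /f; case k_owner: (owner s k) => //; case: all_owned; exists k.
have f_inj : injective f.
  by move=> k1 k2 f12; apply: (owner_inj inv (owner_f k1)); rewrite f12 owner_f.
have [f' _ f'K] := injF_bij f_inj.
by case: i_free; exists (f' i); rewrite owner_f f'K.
Qed.

Lemma terminal_current_lt (s : state n) (k0 j : 'I_n) :
  terminal step s -> cur s = Some k0 -> ~ assigned s j -> vset v j (bag s k0) < alpha.
Proof.
move=> s_term cur_k0 j_free; have ph2 := terminal_phase2 s_term.
rewrite ltNge; apply/negP => j_val; have [j' j'_elig] := eligible_exists j_free j_val.
by apply: s_term; eexists; exact: step_assign ph2 cur_k0 j'_elig.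
Qed.

Lemma terminal_goods_added (s : state n) (k0 : 'I_n) :
  terminal step s -> cur s = Some k0 ->
  forall g, (2 * n < g <= m)%N -> exists k, g \in added s k.
Proof.
move=> s_term cur_k0 g /andP[g_gt g_le]; have ph2 := terminal_phase2 s_term.
have k0_lt := terminal_current_lt s_term cur_k0.
apply: NNPP => g_new; apply: s_term; eexists.
apply: (step_add ph2 cur_k0 k0_lt g_gt g_le) => k.
by apply/negP => g_in; apply: g_new; exists k.
Qed.

Lemma card_high_bags (s : state n) (k0 i : 'I_n) :
  invariant s -> phase2 s -> cur s = Some k0 -> inN11 delta v i -> ~ assigned s i ->
  vset v i (bag s k0) < alpha ->
  (#|[set k | (alpha <= vset v i (bag s k))%R]| <= #|[set j | inN11 delta v j]|)%N.
Proof.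
move=> inv ph2 cur_k0 i_N11 i_free k0_lt; set S := [set k | _].
pose f k := odflt i (owner s k).
have owner_f k : k \in S -> owner s k = Some (f k).
  rewrite inE /f => k_val; case k_owner: (owner s k) => [//|]; exfalso.
  move: k_val; apply/negP; rewrite -ltNge.
  have [->//|k_ne] := eqVneq k k0.
  apply: (phase2_unowned_lt inv ph2 k_owner) => // cur_k.
  by move: cur_k0; rewrite cur_k => -[k_k0]; rewrite k_k0 eqxx in k_ne.
have f_inj : {in S &, injective f}.
  by move=> k1 k2 k1S k2S f12; apply: (owner_inj inv (owner_f k1 k1S)); rewrite f12 owner_f.
rewrite -(card_in_imset f_inj); apply/subset_leq_card/subsetP => _ /imsetP[k kS ->].
rewrite inE; apply: (owner_priority inv (owner_f k kS) i_N11 i_free).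
by move: kS; rewrite inE.
Qed.

Lemma bag_value_le (s : state n) (i k : 'I_n) :
  invariant s -> inN1 v i -> ~ assigned s i ->
  vset v i (bag s k) <= alpha + Num.max (1 - alpha) (v i (2 * n + 1)%N).
Proof.
move=> inv /forallP i_N1 i_free.
have [max_ge1 max_gew] : 1 - alpha <= Num.max (1 - alpha) (v i (2 * n + 1)%N) /\
    v i (2 * n + 1)%N <= Num.max (1 - alpha) (v i (2 * n + 1)%N).
  by rewrite !le_max !lexx orbT.
case k_added: (added s k) => [|g gs].
  by have := i_N1 k; rewrite /bag k_added cats0; lra.
have k_nonempty : added s k <> [::] by rewrite k_added.
by have [//|] := added_bag_lt inv i k_nonempty; lra.
Qed.

Lemma terminal_N11_assigned (s : state n) (i : 'I_n) :
  normalized m v -> irreducible v alpha ->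
  (* the paper's bound on |N^1_1|, as alpha / 3 = 1/4 + delta / 3 and 1 - alpha = 1/4 - delta *)
  #|[set j | inN11 delta v j]|%:R * (alpha / 3) <= n%:R * (1 - alpha) ->
  invariant s -> terminal step s -> inN11 delta v i -> assigned s i.
Proof.
move=> v_norm v_irr N11_small inv s_term i_N11; apply: NNPP => i_free.
have [k0 cur_k0] := terminal_current inv s_term i_free.
have k0_lt := terminal_current_lt s_term cur_k0 i_free.
set S := [set k | alpha <= vset v i (bag s k)].
have k0_notin_S : k0 \notin S by rewrite inE -ltNge.
have lt_off_S k : k \notin S -> vset v i (bag s k) < alpha by rewrite inE -ltNge.
have := sum_lt_threshold k0_notin_S
  (fun k _ => bag_value_le k inv (andP i_N11).1 i_free) lt_off_S.
have := normalized_le_sum_bags v_valid i v_norm (terminal_goods_added s_term cur_k0).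
have S_le_n : (#|S| <= n)%N by rewrite -[n in (_ <= n)%N]card_ord max_card.
have := excess_count_le (v_valid.1 i _) (irreducible_tail_lt v_valid v_ord i v_irr)
  (card_high_bags inv (terminal_phase2 s_term) cur_k0 i_N11 i_free k0_lt) S_le_n N11_small.
lra.
Qed.

End Algorithm.

Theorem lemma22 (R : realFieldType) (n m : nat) (v : 'I_n -> nat -> R) (delta : R) :
  delta <= 1/4 ->
  valid_instance m v ->
  ONI m v delta ->
  (#|[set i | inN11 delta v i]|%:R <= n%:R * (1/4 - delta) / (1/4 + delta / 3)) ->
  forall s : state n,
  reach (alg_step m v delta) (init_state n) s ->
  terminal (alg_step m v delta) s ->
  forall i : 'I_n, inN11 delta v i ->
  forall mu : R, is_MMS m v i mu ->
  exists k : 'I_n, owner s k = Some i /\ (3/4 + delta) * mu <= vset v i (bag s k).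
Proof.
move=> _ v_valid [v_ord v_norm v_irr] N11_small s s_reach s_term i i_N11 mu i_MMS.
have inv := invariant_reach v_valid v_ord s_reach.
have alpha_gt0 : 0 < 3/4 + delta.
  by have := irreducible_tail_lt v_valid v_ord i v_irr; have := v_valid.1 i (2 * n + 1)%N; lra.
rewrite ler_pdivlMr in N11_small; last lra.
have [k k_owner] : assigned s i.
  by apply: (terminal_N11_assigned v_valid v_ord v_norm v_irr _ inv s_term i_N11); lra.
exists k; split=> //; rewrite (normalized_MMS v_norm i_MMS) mulr1.
exact: (owner_value inv k_owner).
Qed.
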